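(* Under the setting below, for parameters $\gamma\in(0,1)$ and $\delta>0$, the policy $\mathcal P$ satisfies, for every $k\in\mathcal K$, $$\mathbb E\big[V_{\rm ESP}(\mathcal P)\big]\ge(1-\gamma)\Big(1-\frac\delta2\Big)V_{\rm ESP}(k)-\Phi(\epsilon,\delta,\gamma).$$
   Context: Fix integers $N,T\ge1$ and reals $\bar c>0$, $p_{\min}>0$, $\epsilon>0$, $\bar E\ge p_{\min}(1+\epsilon)$. For each $n\in\{1,\dots,N\}$ and $t\in\{1,\dots,T\}$ fix $c_{n,t}\in[0,\bar c]$ and a response function $z_{n,t}:[p_{\min},\infty)\to[0,1]$, fixed in advance (not depending on the policy's random choices). Let $K=\lfloor\log_{1+\epsilon}(\bar E/p_{\min})\rfloor$, $\mathcal K=\{1,\dots,K\}$, $p(k)=p_{\min}(1+\epsilon)^k$, $V_{t,n}(k)=p(k)\,c_{n,t}\,z_{n,t}(p(k))$, $V_{\rm ESP}(k)=\sum_{n=1}^N\sum_{t=1}^TV_{t,n}(k)$, and $\mathcal S=\sum_{i=1}^K(1+\epsilon)^i$. Policy $\mathcal P$ with parameters $\gamma\in(0,1)$, $\delta>0$: set $\omega_1(k)=1$ for all $k$. For $t=1,\dots,T$: let $h_t(k)=(1-\gamma)\frac{\omega_t(k)}{\sum_{j=1}^K\omega_t(j)}+\gamma\frac{(1+\epsilon)^k}{\mathcal S}$; for each $n$ independently draw $\kappa_{t,n}\in\mathcal K$ with $\Pr[\kappa_{t,n}=k]=h_t(k)$, offer price $p(\kappa_{t,n})$ and receive $V_{t,n}(\kappa_{t,n})$;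 write $\kappa_t=(\kappa_{t,n})_n$; for each $k$ let $V_t(k,\kappa_t)=\sum_{n=1}^NV_{t,n}(\kappa_{t,n})\mathbf 1\{\kappa_{t,n}=k\}$, $\hat V_t(k,\kappa_t)=\frac{V_t(k,\kappa_t)}{N\bar c\,p_{\min}}\cdot\frac{\gamma}{h_t(k)\,\mathcal S}$, and $\omega_{t+1}(k)=\omega_t(k)(1+\delta)^{\hat V_t(k,\kappa_t)}$. The policy's total revenue is $V_{\rm ESP}(\mathcal P)=\sum_{n=1}^N\sum_{t=1}^TV_{t,n}(\kappa_{t,n})$. Define $\Phi(\epsilon,\delta,\gamma)=\frac{1-\gamma}{\gamma}\cdot\frac{1+\epsilon}{\epsilon}\cdot\frac{N\bar E\bar c}{\delta}\cdot\ln\!\Big(\frac{\ln(\bar E/p_{\min})}{\ln(1+\epsilon)}\Big)$. *)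

From HB Require Import structures.
From mathcomp Require Import all_boot all_order all_algebra.
From mathcomp Require Import all_classical all_reals all_analysis.
Unset Printing Implicit Defensive.
Import Order.TTheory GRing.Theory Num.Theory.
Local Open Scope ring_scope.

Section ESP.
Variable R : realType.

(* K = floor(log_{1+eps}(Ebar/pmin)); the argument is >= 1 under the
   hypotheses, so Num.truncn (floor on nonnegatives, as a nat) is the floor. *)
Definition Kn (pmin eps Ebar : R) : nat :=
  Num.truncn (ln (Ebar / pmin) / ln (1 + eps)).

Definition price (pmin eps : R) (k : nat) : R := pmin * (1 + eps) ^+ k.

(* c n t, z n t use the paper's 1-based indices n in 1..N, t in 1..T *)
Definition Vtn (pmin eps : R) (c : nat -> nat -> R) (z : nat -> nat -> R -> R)
  (t n k : nat) : R :=
  price pmin eps k * c n t * z n t (price pmin eps k).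

Definition V_ESP (N T : nat) (pmin eps : R) (c : nat -> nat -> R)
  (z : nat -> nat -> R -> R) (k : nat) : R :=
  \sum_(n < N) \sum_(t < T) Vtn pmin eps c z t.+1 n.+1 k.

(* Arms are i : 'I_K, standing for k = i.+1 in {1,..,K}. *)
Definition Ssum (eps : R) (K : nat) : R := \sum_(i < K) (1 + eps) ^+ i.+1.

Definition hprob (gamma eps : R) (K : nat) (w : {ffun 'I_K -> R}) (i : 'I_K) : R :=
  (1 - gamma) * (w i / \sum_(j < K) w j)
  + gamma * ((1 + eps) ^+ i.+1 / Ssum eps K).

Section Round.
Variables (N : nat) (cbar pmin eps gamma delta : R)
  (c : nat -> nat -> R) (z : nat -> nat -> R -> R) (K : nat).

Definition round_rev (t : nat) (kappa : {ffun 'I_N -> 'I_K}) : R :=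
  \sum_(n < N) Vtn pmin eps c z t n.+1 (kappa n).+1.

Definition Vt_arm (t : nat) (kappa : {ffun 'I_N -> 'I_K}) (i : 'I_K) : R :=
  \sum_(n < N) Vtn pmin eps c z t n.+1 (kappa n).+1 * (kappa n == i)%:R.

Definition Vhat (t : nat) (w : {ffun 'I_K -> R}) (kappa : {ffun 'I_N -> 'I_K})
  (i : 'I_K) : R :=
  Vt_arm t kappa i / (N%:R * cbar * pmin)
  * (gamma / (hprob gamma eps K w i * Ssum eps K)).

Definition update (t : nat) (w : {ffun 'I_K -> R}) (kappa : {ffun 'I_N -> 'I_K})
  : {ffun 'I_K -> R} :=
  [ffun i => w i * powR (1 + delta) (Vhat t w kappa i)].

(* Expected revenue collected in rounds t, t+1, ..., t+m-1 (1-based rounds),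
   starting with weights w: in each round the offers kappa_{t,n} are drawn
   independently over n from h_t, revenue is collected, weights updated. *)
Fixpoint exp_rev (m t : nat) (w : {ffun 'I_K -> R}) : R :=
  match m with
  | 0 => 0
  | m'.+1 =>
      \sum_(kappa : {ffun 'I_N -> 'I_K})
        (\prod_(n < N) hprob gamma eps K w (kappa n)) *
        (round_rev t kappa + exp_rev m' t.+1 (update t w kappa))
  end.
End Round.

Definition expected_policy_revenue (N T : nat) (cbar pmin eps Ebar gamma delta : R)
  (c : nat -> nat -> R) (z : nat -> nat -> R -> R) : R :=
  exp_rev N cbar pmin eps gamma delta c z (Kn pmin eps Ebar) T 1 [ffun => 1].

Definition Phi (N : nat) (cbar pmin Ebar eps delta gamma : R) : R :=
  (1 - gamma) / gamma * ((1 + eps) / eps) * (N%:R * Ebar * cbar / delta)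
  * ln (ln (Ebar / pmin) / ln (1 + eps)).

End ESP.

Arguments Kn {R}.
Arguments V_ESP {R}.
Arguments expected_policy_revenue {R}.
Arguments Phi {R}.

From HB Require Import structures.
From mathcomp Require Import all_boot all_order all_algebra.
From mathcomp Require Import all_classical all_reals all_analysis.
From mathcomp.algebra_tactics Require Import ring lra.
Import Order.TTheory GRing.Theory Num.Theory.
Import numFieldNormedType.Exports.
Local Open Scope classical_set_scope.
Local Open Scope ring_scope.

(* The proof is the classical potential argument for exponential weights.
   Fix a comparison arm k and the potential ln(sum_j w_j) - ln(w_k).  In each
   round the estimate vhat of every arm lies in [0,1]; hence, using
   (1+delta)^x <= 1 + delta x on [0,1] and the exploitation part of h_t, the
   total weight grows by at most a factor 1 + a * (round revenue), while w_k
   grows by exactly (1+delta)^(vhat_k).  Averaging over the independent offers,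
   vhat_k is unbiased for the revenue of arm k up to the factor gamma / scale,
   so by induction over the rounds
       b * V_ESP(k) <= a * E[V_ESP(P)] + ln K,
   with a = delta gamma / ((1-gamma) scale) (rev_rate), b = ln(1+delta) gamma
   / scale (gain_rate) and scale = N cbar pmin S.
   Finally ln(1+delta) >= delta - delta^2/2 gives a (1-gamma)(1-delta/2) <= b,
   and the choice of K (K <= log_{1+eps}(Ebar/pmin), p(K) <= Ebar) gives
   ln K <= a * Phi. *)

(* Proof: f(y) = ln y - 2y + y^2/2
   has derivative (y-1)^2/y >= 0, so f(1+d) >= f(1) by the mean value theorem. *)
Lemma ln1D_ge_quadratic (R : realType) (d : R) :
  0 <= d -> d - d ^+ 2 / 2 <= ln (1 + d).
Proof.
move=> d0.
pose f : R -> R :=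
  ((@ln R - (2:R) \*: (@id R) : R -> R)
   + ((2^-1 : R) \*: ((@id R : R -> R) ^+ 2)))%R.
have f' (x : R) : 0 < x -> is_derive x 1 f (x^-1 - 2 + x).
  move=> x0; apply: is_derive_eq.
    by apply: is_deriveD; first apply: is_deriveB; exact: is_derive1_ln.
  by rewrite /= expr1 /GRing.scale /=; field; rewrite gt_eqF.
have f_cont : {within `[1, 1 + d], continuous f}.
  apply: derivable_within_continuous => x /[!in_itv] /= /andP[x1 _].
  by apply: ex_derive; apply: f'; lra.
have [|y /[!in_itv] /= /andP[y1 _] mvt] :=
  @MVT_segment R f (fun x => x^-1 - 2 + x) _ _ (ler_wpDr d0 (lexx 1)) _ f_cont.
  by move=> x /[!in_itv] /= /andP[x1 _]; apply: f'; lra.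
have f'_ge0 : 0 <= y^-1 - 2 + y.
  have : y^-1 * y = 1 by rewrite mulVf // gt_eqF //; lra.
  nra.
have : 0 <= f (1 + d) - f 1 by rewrite mvt; apply: mulr_ge0 => //; lra.
rewrite /f !fctE /= ln1 /GRing.scale /= !expr2 !(mulrC 2^-1).
rewrite mulrDl !mulrDr !mul1r !mulr1; lra.
Qed.

(* For exponents in [0,1] the exponential x |-> (1+d)^x lies below its chord.
   This is Young's inequality a^(1/p) b^(1/q) <= a/p + b/q with a = 1+d, b = 1. *)
Lemma powR_le_chord (R : realType) (d x : R) :
  0 <= d -> 0 <= x <= 1 -> (1 + d) `^ x <= 1 + d * x.
Proof.
move=> d0 /andP[x0 x1].
have [->|xn0] := eqVneq x 0; first by rewrite powRr0 mulr0 addr0.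
have [->|xn1] := eqVneq x 1; first by rewrite powRr1 ?mulr1 //; lra.
have xp : 0 < x by rewrite lt_neqAle eq_sym xn0.
have xl : x < 1 by rewrite lt_neqAle xn1.
have := @conjugate_powR R ((1 + d) `^ x) 1 x^-1 (1 - x)^-1 (powR_ge0 _ _) ler01.
rewrite invr_gt0 xp invr_gt0 subr_gt0 xl !invrK => /(_ isT isT).
rewrite -powRrM mulfV // powRr1; last lra.
rewrite powR1 mul1r mulr1 => young.
have := young (subrKC x 1); lra.
Qed.

Section ProductDistribution.
Context {R : numDomainType} {N K : nat} (p : 'I_K -> R).

Definition prod_expect (f : {ffun 'I_N -> 'I_K} -> R) : R :=
  \sum_(kappa : {ffun 'I_N -> 'I_K}) (\prod_(n < N) p (kappa n)) * f kappa.

Hypothesis p_sum1 : \sum_(i < K) p i = 1.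

(* The product weights have total mass 1, so expectation commutes with
   affine maps. *)
Lemma prod_expect_affine (x y : R) (f : {ffun 'I_N -> 'I_K} -> R) :
  prod_expect (fun kappa => x * f kappa + y) = x * prod_expect f + y.
Proof.
have mass1 : \sum_(kappa : {ffun 'I_N -> 'I_K}) \prod_(n < N) p (kappa n) = 1.
  by rewrite -(bigA_distr_bigA (fun _ j => p j)) big1.
rewrite /prod_expect -[y in RHS]mul1r -[X in _ + X * y]mass1.
rewrite mulr_sumr mulr_suml -big_split /=.
by apply: eq_bigr => kappa _; rewrite mulrDr mulrCA.
Qed.

Lemma prod_expect_sum (I : Type) (r : seq I)
  (F : I -> {ffun 'I_N -> 'I_K} -> R) :
  prod_expect (fun kappa => \sum_(j <- r) F j kappa) =
  \sum_(j <- r) prod_expect (F j).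
Proof.
by rewrite /prod_expect; under eq_bigr do rewrite mulr_sumr; exact: exchange_big.
Qed.

Lemma prod_expect_marginal (n : 'I_N) (g : 'I_K -> R) :
  prod_expect (fun kappa => g (kappa n)) = \sum_(i < K) p i * g i.
Proof.
pose F (m : 'I_N) (j : 'I_K) := if m == n then p j * g j else p j.
have -> : \sum_(i < K) p i * g i = \prod_(m < N) \sum_(j < K) F m j.
  rewrite (bigD1 n) //= [X in _ * X]big1 ?mulr1 /F ?eqxx //.
  by move=> m /negbTE ->.
rewrite bigA_distr_bigA; apply: eq_bigr => kappa _.
rewrite (bigD1 n) //= [in RHS](bigD1 n) //= /F eqxx mulrAC; congr (_ * _).
by apply: eq_bigr => m /negbTE ->.
Qed.

Lemma ler_prod_expect (f g : {ffun 'I_N -> 'I_K} -> R) :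
  (forall i, 0 <= p i) -> (forall kappa, f kappa <= g kappa) ->
  prod_expect f <= prod_expect g.
Proof.
move=> p_ge0 fg; apply: ler_sum => kappa _; apply: ler_wpM2l => //.
exact: prodr_ge0.
Qed.

End ProductDistribution.

Section Exp3Analysis.
Variables (R : realType) (N T : nat) (cbar pmin eps gamma delta : R).
Variables (c : nat -> nat -> R) (z : nat -> nat -> R -> R) (K : nat).
Hypotheses (N_gt0 : (1 <= N)%N) (K_gt0 : (0 < K)%N).
Hypotheses (cbar_gt0 : 0 < cbar) (pmin_gt0 : 0 < pmin) (eps_gt0 : 0 < eps).
Hypotheses (gamma01 : 0 < gamma < 1) (delta_gt0 : 0 < delta).
Hypothesis c_bnd :
  forall n t, (1 <= n <= N)%N -> (1 <= t <= T)%N -> 0 <= c n t <= cbar.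
Hypothesis z_bnd : forall n t p, (1 <= n <= N)%N -> (1 <= t <= T)%N ->
  pmin <= p -> 0 <= z n t p <= 1.

Local Notation V := (Vtn R pmin eps c z).
Local Notation pr := (price R pmin eps).
Local Notation S := (Ssum R eps K).
Local Notation h := (hprob R gamma eps K).
Local Notation Va := (Vt_arm R N pmin eps c z K).
Local Notation vh := (Vhat R N cbar pmin eps gamma c z K).
Local Notation rev := (round_rev R N pmin eps c z K).
Local Notation upd := (update R N cbar pmin eps gamma delta c z K).
Local Notation Erev := (exp_rev R N cbar pmin eps gamma delta c z K).
Local Notation W w := (\sum_(j < K) w j).

Definition scale : R := N%:R * cbar * pmin * S.
Definition rev_rate : R := delta * gamma / ((1 - gamma) * scale).
Definition gain_rate : R := ln (1 + delta) * gamma / scale.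

Definition fixed_rev (t : nat) (k : 'I_K) : R := \sum_(n < N) V t n.+1 k.+1.

Definition posw (w : {ffun 'I_K -> R}) : Prop := forall i, 0 < w i.

Definition potential (k : 'I_K) (w : {ffun 'I_K -> R}) : R :=
  ln (W w) - ln (w k).

Lemma growth_gt0 j : 0 < (1 + eps) ^+ j.
Proof. by apply/exprn_gt0/addr_gt0. Qed.

Lemma S_gt0 : 0 < S.
Proof.
rewrite /Ssum (bigD1 (Ordinal K_gt0)) //=.
apply: ltr_pwDl; first exact: growth_gt0.
by apply: sumr_ge0 => i _; exact/ltW/growth_gt0.
Qed.

Lemma scale_gt0 : 0 < scale.
Proof. by rewrite /scale !mulr_gt0 ?ltr0n ?S_gt0. Qed.

Lemma rev_rate_gt0 : 0 < rev_rate.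
Proof.
case/andP: gamma01 => g0 g1; apply: divr_gt0; first exact: mulr_gt0.
by rewrite mulr_gt0 ?subr_gt0 ?scale_gt0.
Qed.

Lemma pmin_le_price j : pmin <= pr j.
Proof.
by rewrite /price ler_peMr ?(ltW pmin_gt0) // exprn_ege1 // lerDl ltW.
Qed.

Lemma V_bnd j {t n : nat} : (1 <= t <= T)%N -> (n < N)%N ->
  0 <= V t n.+1 j <= pr j * cbar.
Proof.
move=> tT nN; have nN' : (1 <= n.+1 <= N)%N by [].
have /andP[c0 c1] := c_bnd _ _ nN' tT.
have /andP[z0 z1] := z_bnd _ _ _ nN' tT (pmin_le_price j).
have p0 : 0 <= pr j := le_trans (ltW pmin_gt0) (pmin_le_price j).
rewrite /Vtn; apply/andP; split; first exact/mulr_ge0/z0/mulr_ge0.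
rewrite -[leRHS]mulr1.
by apply: ler_pM => //; [exact: mulr_ge0 | exact: ler_wpM2l].
Qed.

Lemma rev_ge0 t kappa : (1 <= t <= T)%N -> 0 <= rev t kappa.
Proof.
move=> tT; apply: sumr_ge0 => n _.
by case/andP: (V_bnd (kappa n).+1 tT (ltn_ord n)).
Qed.

Lemma fixed_rev_ge0 t k : (1 <= t <= T)%N -> 0 <= fixed_rev t k.
Proof.
by move=> tT; apply: sumr_ge0 => n _; case/andP: (V_bnd k.+1 tT (ltn_ord n)).
Qed.

Lemma Va_bnd t kappa i : (1 <= t <= T)%N ->
  0 <= Va t kappa i <= N%:R * (pr i.+1 * cbar).
Proof.
move=> tT; rewrite /Vt_arm; apply/andP; split.
  apply: sumr_ge0 => n _; apply: mulr_ge0; last by case: eqP.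
  by case/andP: (V_bnd (kappa n).+1 tT (ltn_ord n)).
rewrite mulr_natl -[in X in _ <= X](card_ord N) -sumr_const.
apply: ler_sum => n _; case: eqP => [->|_]; rewrite ?mulr1 ?mulr0.
  by case/andP: (V_bnd i.+1 tT (ltn_ord n)).
by case/andP: (V_bnd i.+1 tT (ltn_ord n)) => V0 V1; apply: le_trans V1.
Qed.

Lemma Va_sum t kappa : \sum_(i < K) Va t kappa i = rev t kappa.
Proof.
rewrite /Vt_arm /round_rev exchange_big; apply: eq_bigr => n _ /=.
rewrite -mulr_sumr (bigD1 (kappa n)) //= eqxx big1 ?addr0 ?mulr1 //.
by move=> i /negbTE; rewrite eq_sym => ->.
Qed.

Lemma wsum_gt0 (w : {ffun 'I_K -> R}) : posw w -> 0 < W w.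
Proof.
move=> w_gt0; rewrite (bigD1 (Ordinal K_gt0)) //=.
by apply: ltr_pwDl => //; apply: sumr_ge0 => i _; apply: ltW.
Qed.

Lemma h_sum1 (w : {ffun 'I_K -> R}) : posw w -> \sum_(i < K) h w i = 1.
Proof.
move=> w_gt0; rewrite /hprob big_split /= -!mulr_sumr -!mulr_suml.
by rewrite -/(Ssum R eps K) !divff ?gt_eqF ?wsum_gt0 ?S_gt0 // !mulr1 subrK.
Qed.

Lemma h_explore (w : {ffun 'I_K -> R}) (i : 'I_K) :
  posw w -> gamma * ((1 + eps) ^+ i.+1 / S) <= h w i.
Proof.
move=> w_gt0; case/andP: gamma01 => _ g1.
rewrite /hprob lerDr; apply: mulr_ge0; first by rewrite subr_ge0 ltW.
by rewrite divr_ge0 ?ltW ?wsum_gt0.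
Qed.

Lemma h_exploit (w : {ffun 'I_K -> R}) (i : 'I_K) :
  posw w -> (1 - gamma) * (w i / W w) <= h w i.
Proof.
move=> w_gt0; case/andP: gamma01 => g0 _.
rewrite /hprob lerDl; apply: mulr_ge0; first exact: ltW.
by rewrite ltW ?divr_gt0 ?growth_gt0 ?S_gt0.
Qed.

Lemma h_gt0 (w : {ffun 'I_K -> R}) (i : 'I_K) : posw w -> 0 < h w i.
Proof.
move=> w_gt0; apply: lt_le_trans (h_explore _ i w_gt0).
by case/andP: gamma01 => g0 _; rewrite mulr_gt0 ?divr_gt0 ?growth_gt0 ?S_gt0.
Qed.

(* The importance-weighted estimate lies in [0,1]: it factors as the fraction
   Va / (N cbar p(i)) of the maximal credit, times gamma (1+eps)^(i+1) / (h S),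
   which is at most 1 by exploration. *)
Lemma vhat_bnd t w (kappa : {ffun 'I_N -> 'I_K}) (i : 'I_K) :
  (1 <= t <= T)%N -> posw w -> 0 <= vh t w kappa i <= 1.
Proof.
move=> tT w_gt0; have /andP[Va0 Va1] := Va_bnd t kappa i tT.
have h0 := h_gt0 _ i w_gt0; have S0 := S_gt0; have e0 := growth_gt0 i.+1.
have N0 : 0 < N%:R :> R by rewrite ltr0n.
have M0 : 0 < N%:R * (pr i.+1 * cbar) by rewrite !mulr_gt0.
have -> : vh t w kappa i = Va t kappa i / (N%:R * (pr i.+1 * cbar))
    * (gamma * (1 + eps) ^+ i.+1 / (h w i * S)).
  by rewrite /Vhat /price; field; rewrite !gt_eqF.
case/andP: gamma01 => g0 _.
have u0 : 0 <= Va t kappa i / (N%:R * (pr i.+1 * cbar)) := divr_ge0 Va0 (ltW M0).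
have u1 : Va t kappa i / (N%:R * (pr i.+1 * cbar)) <= 1.
  by rewrite ler_pdivrMr // mul1r.
have v0 : 0 <= gamma * (1 + eps) ^+ i.+1 / (h w i * S).
  by rewrite divr_ge0 // ltW // ?mulr_gt0.
have v1 : gamma * (1 + eps) ^+ i.+1 / (h w i * S) <= 1.
  by rewrite ler_pdivrMr ?mulr_gt0 // mul1r -ler_pdivrMr // -mulrA h_explore.
by rewrite mulr_ge0 //= mulr_ile1.
Qed.

(* Exploitation bounds the weighted estimate w_i vhat_i by the credit of arm i. *)
Lemma weight_vhat_le t w (kappa : {ffun 'I_N -> 'I_K}) (i : 'I_K) :
  (1 <= t <= T)%N -> posw w ->
  w i * vh t w kappa i <= W w * Va t kappa i * (gamma / ((1 - gamma) * scale)).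
Proof.
move=> tT w_gt0; have /andP[Va0 _] := Va_bnd t kappa i tT.
have h0 := h_gt0 _ i w_gt0; have W0 := wsum_gt0 _ w_gt0; have D0 := scale_gt0.
case/andP: gamma01 => g0 g1; have g1' : 0 < 1 - gamma by rewrite subr_gt0.
have w_le : w i <= h w i * W w / (1 - gamma).
  by rewrite ler_pdivlMr // -ler_pdivrMr // mulrAC mulrC h_exploit.
have -> : W w * Va t kappa i * (gamma / ((1 - gamma) * scale)) =
    h w i * W w / (1 - gamma) * (Va t kappa i / (h w i * scale) * gamma).
  by field; rewrite !gt_eqF.
have -> : vh t w kappa i = Va t kappa i / (h w i * scale) * gamma.
  by rewrite /Vhat /scale; field; rewrite !gt_eqF ?S_gt0 ?ltr0n.
apply: ler_wpM2r w_le; apply: mulr_ge0 (ltW g0).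
exact/(divr_ge0 Va0)/ltW/mulr_gt0.
Qed.

Lemma update_pos t w (kappa : {ffun 'I_N -> 'I_K}) :
  posw w -> posw (upd t w kappa).
Proof.
move=> w_gt0 i; rewrite /update ffunE mulr_gt0 // powR_gt0 //.
by rewrite addr_gt0.
Qed.

(* Multiplicative update of the total weight: since vhat lies in [0,1],
   (1+delta)^vhat <= 1 + delta vhat, and exploitation turns the weighted
   estimates into at most the round revenue. *)
Lemma weight_sum_update t w (kappa : {ffun 'I_N -> 'I_K}) :
  (1 <= t <= T)%N -> posw w ->
  W (upd t w kappa) <= W w * (1 + rev_rate * rev t kappa).
Proof.
move=> tT w_gt0; set C := gamma / ((1 - gamma) * scale).
have step j : upd t w kappa j <= w j + delta * (W w * Va t kappa j * C).
  rewrite /update ffunE; have /andP[v0 v1] := vhat_bnd t w kappa j tT w_gt0.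
  apply: le_trans (_ : w j * (1 + delta * vh t w kappa j) <= _).
    by apply/(ler_wpM2l (ltW (w_gt0 j)))/powR_le_chord; rewrite ?v0 // ltW.
  rewrite mulrDr mulr1 lerD2l mulrCA (ler_wpM2l (ltW delta_gt0)) //.
  exact: weight_vhat_le.
apply: le_trans (ler_sum _ (fun j _ => step j)) _.
rewrite big_split /= -mulr_sumr -mulr_suml -mulr_sumr Va_sum.
rewrite mulrDr mulr1 lerD2l.
suff -> : W w * (rev_rate * rev t kappa) = delta * (W w * rev t kappa * C) by [].
by rewrite /rev_rate /C; ring.
Qed.

Lemma potential_update (k : 'I_K) t w (kappa : {ffun 'I_N -> 'I_K}) :
  (1 <= t <= T)%N -> posw w ->
  potential k (upd t w kappa) <=
  potential k w + rev_rate * rev t kappa - ln (1 + delta) * vh t w kappa k.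
Proof.
move=> tT w_gt0; have W0 := wsum_gt0 _ w_gt0.
have ar0 : 0 <= rev_rate * rev t kappa.
  by rewrite mulr_ge0 ?rev_ge0 // ltW // rev_rate_gt0.
have ar1 : 0 < 1 + rev_rate * rev t kappa by rewrite ltr_pwDl.
have Wu0 : 0 < W (upd t w kappa) := wsum_gt0 _ (update_pos t w kappa w_gt0).
have lnW : ln (W (upd t w kappa)) <= ln (W w) + rev_rate * rev t kappa.
  apply: le_trans (_ : ln (W w * (1 + rev_rate * rev t kappa)) <= _).
    by rewrite ler_ln ?posrE ?mulr_gt0 // weight_sum_update.
  rewrite lnM ?posrE // lerD2l le_ln1Dx //.
  by apply: lt_le_trans ar0; rewrite oppr_lt0.
have lnwk : ln (upd t w kappa k) = ln (w k) + vh t w kappa k * ln (1 + delta).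
  by rewrite /update ffunE lnM ?ln_powR // posrE // powR_gt0 // addr_gt0.
by rewrite /potential lnwk; move: lnW; rewrite [vh _ _ _ _ * _]mulrC; lra.
Qed.

Lemma expect_vhat t w (k : 'I_K) : posw w ->
  prod_expect (h w) (fun kappa => vh t w kappa k) = fixed_rev t k * gamma / scale.
Proof.
move=> w_gt0; have hk := h_gt0 _ k w_gt0; have S0 := S_gt0.
have N0 : 0 < N%:R :> R by rewrite ltr0n.
pose C := gamma / (N%:R * cbar * pmin * (h w k * S)).
have -> : (fun kappa => vh t w kappa k) = (fun kappa => C * Va t kappa k + 0).
  by apply: funext => kappa; rewrite addr0 /Vhat /C; field; rewrite !gt_eqF.
rewrite prod_expect_affine ?h_sum1 // addr0 /Vt_arm prod_expect_sum.
under eq_bigr => n _.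
  rewrite (prod_expect_marginal _ (h_sum1 _ w_gt0) n
    (fun i => V t n.+1 i.+1 * (i == k)%:R)).
  rewrite (bigD1 k) //= eqxx mulr1 big1 ?addr0; last first.
    by move=> i /negbTE ->; rewrite !mulr0.
  over.
rewrite -mulr_sumr /C /fixed_rev /scale; field; rewrite !gt_eqF //.
Qed.

Lemma potential_bound (k : 'I_K) m t w :
  posw w -> (1 <= t)%N -> (t + m <= T.+1)%N ->
  gain_rate * \sum_(s < m) fixed_rev (t + s) k <=
  rev_rate * Erev m t w + potential k w.
Proof.
elim: m t w => [|m IH] t w w_gt0 t1 tm.
  rewrite big_ord0 mulr0 /= mulr0 add0r /potential subr_ge0.
  rewrite ler_ln ?posrE ?wsum_gt0 // (bigD1 k) //= lerDl.
  by apply: sumr_ge0 => i _; exact: ltW.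
have tT : (1 <= t <= T)%N.
  by rewrite t1 -ltnS (leq_trans _ tm) // addnS ltnS leq_addr.
have h_ge0 i : 0 <= h w i by exact/ltW/h_gt0.
rewrite big_ord_recl addn0.
under eq_bigr do rewrite lift0 addnS -addSn.
set rest := \sum_(s < m) _.
have -> : gain_rate * (fixed_rev t k + rest) =
    prod_expect (h w)
      (fun kappa => ln (1 + delta) * vh t w kappa k + gain_rate * rest).
  rewrite prod_expect_affine ?h_sum1 // expect_vhat // mulrDr /gain_rate.
  by congr (_ + _); field; rewrite gt_eqF ?scale_gt0.
change (Erev m.+1 t w) with
  (prod_expect (h w) (fun kappa => rev t kappa + Erev m t.+1 (upd t w kappa))).
rewrite -prod_expect_affine ?h_sum1 //.
apply: ler_prod_expect => // kappa.
have tm' : (t.+1 + m <= T.+1)%N by rewrite addSn -addnS.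
have := IH t.+1 (upd t w kappa) (update_pos t w kappa w_gt0) (ltnW t1) tm'.
have := potential_update k t w kappa tT w_gt0.
rewrite /rest; lra.
Qed.

(* Starting from uniform weights the initial potential is ln K. *)
Lemma policy_regret (k : 'I_K) :
  gain_rate * \sum_(t < T) fixed_rev t.+1 k <=
  rev_rate * Erev T 1 [ffun => 1] + ln K%:R.
Proof.
have w1 : posw [ffun => 1] by move=> i; rewrite ffunE.
have W1 : \sum_(j < K) ([ffun => 1] : {ffun 'I_K -> R}) j = K%:R.
  by rewrite (eq_bigr (fun _ => 1)) ?sumr_const ?card_ord // => j _; rewrite ffunE.
have := potential_bound k T 1 _ w1 (leqnn 1) (leqnn T.+1).
by rewrite /potential W1 ffunE ln1 subr0.
Qed.

(* The second-order bound on ln(1+delta) relates the two rates. *)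
Lemma rev_rate_le_gain :
  rev_rate * ((1 - gamma) * (1 - delta / 2)) <= gain_rate.
Proof.
case/andP: gamma01 => g0 g1; have D0 := scale_gt0.
have -> : rev_rate * ((1 - gamma) * (1 - delta / 2)) =
    (delta - delta ^+ 2 / 2) * gamma / scale.
  by rewrite /rev_rate; field; rewrite !gt_eqF ?subr_gt0.
by rewrite /gain_rate !ler_pM2r ?invr_gt0 // ln1D_ge_quadratic // ltW.
Qed.

Lemma ln_arms_le (Ebar : R) :
  K%:R <= ln (Ebar / pmin) / ln (1 + eps) ->
  eps * (pmin * S) <= (1 + eps) * Ebar ->
  ln K%:R <= rev_rate * Phi N cbar pmin Ebar eps delta gamma.
Proof.
set x := ln (Ebar / pmin) / ln (1 + eps) => Kx SE.
case/andP: gamma01 => g0 g1; have D0 := scale_gt0.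
have K1 : 1 <= K%:R :> R by rewrite ler1n.
have N0 : 0 < N%:R :> R by rewrite ltr0n.
have lnKx : ln K%:R <= ln x.
  by rewrite ler_ln ?posrE // (lt_le_trans ltr01) // (le_trans K1).
have lnx0 : 0 <= ln x by rewrite ln_ge0 // (le_trans K1).
have -> : rev_rate * Phi N cbar pmin Ebar eps delta gamma =
    ln x * ((1 + eps) * (N%:R * Ebar * cbar) / (eps * scale)).
  rewrite /rev_rate /Phi -/x; field.
  by rewrite !gt_eqF ?subr_gt0 // addr_gt0.
apply: (le_trans lnKx); rewrite -[leLHS]mulr1 ler_wpM2l //.
rewrite ler_pdivlMr ?mul1r; last exact: mulr_gt0.
have -> : eps * scale = N%:R * cbar * (eps * (pmin * S)) by rewrite /scale; ring.
have -> : (1 + eps) * (N%:R * Ebar * cbar) = N%:R * cbar * ((1 + eps) * Ebar).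
  by ring.
by rewrite ler_wpM2l // ltW // mulr_gt0.
Qed.

Lemma V_ESP_fixed_rev (k : 'I_K) :
  V_ESP N T pmin eps c z k.+1 = \sum_(t < T) fixed_rev t.+1 k.
Proof. by rewrite /V_ESP exchange_big. Qed.

Lemma expected_revenue_lower_bound (Ebar : R) (k : 'I_K) :
  K%:R <= ln (Ebar / pmin) / ln (1 + eps) ->
  eps * (pmin * S) <= (1 + eps) * Ebar ->
  (1 - gamma) * (1 - delta / 2) * V_ESP N T pmin eps c z k.+1
    - Phi N cbar pmin Ebar eps delta gamma <= Erev T 1 [ffun => 1].
Proof.
move=> Kx SE; rewrite V_ESP_fixed_rev.
have V0 : 0 <= \sum_(t < T) fixed_rev t.+1 k.
  by apply: sumr_ge0 => t _; apply: fixed_rev_ge0; rewrite ltn_ord.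
have rates := ler_wpM2r V0 rev_rate_le_gain.
have lnK := ln_arms_le Ebar Kx SE; have regret := policy_regret k.
rewrite -(ler_pM2l rev_rate_gt0); lra.
Qed.

End Exp3Analysis.

Lemma Ssum_geometric (R : realType) (eps : R) (K : nat) :
  eps * Ssum R eps K = (1 + eps) ^+ K.+1 - (1 + eps).
Proof.
elim: K => [|K IH]; first by rewrite /Ssum big_ord0 mulr0 expr1 subrr.
by rewrite /Ssum big_ord_recr /= mulrDr -/(Ssum R eps K) IH !exprS; ring.
Qed.

Section PriceLevels.
Context {R : realType} {pmin eps Ebar : R}.
Hypotheses (pmin_gt0 : 0 < pmin) (eps_gt0 : 0 < eps).
Hypothesis Ebar_ge : pmin * (1 + eps) <= Ebar.

Lemma Kn_le : (Kn pmin eps Ebar)%:R <= ln (Ebar / pmin) / ln (1 + eps).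
Proof.
have l0 : 0 < ln (1 + eps) by rewrite ln_gt0 // ltrDl.
have Ep : 1 + eps <= Ebar / pmin by rewrite ler_pdivlMr // mulrC.
rewrite /Kn truncn_le divr_ge0 ?(ltW l0) // ln_ge0 //.
by apply: le_trans Ep; rewrite lerDl ltW.
Qed.

Lemma price_Kn_le : pmin * (1 + eps) ^+ Kn pmin eps Ebar <= Ebar.
Proof.
have e0 : 0 < 1 + eps by rewrite addr_gt0.
have l0 : 0 < ln (1 + eps) by rewrite ln_gt0 // ltrDl.
have E0 : 0 < Ebar / pmin.
  by rewrite divr_gt0 // (lt_le_trans _ Ebar_ge) // mulr_gt0.
rewrite mulrC -ler_pdivlMr // -[X in X ^+ _]lnK ?posrE // -expRM_natl.
rewrite -[X in _ <= X]lnK ?posrE // ler_expR -ler_pdivlMr //.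
exact: Kn_le.
Qed.

Lemma Ssum_Kn_le :
  eps * (pmin * Ssum R eps (Kn pmin eps Ebar)) <= (1 + eps) * Ebar.
Proof.
have := price_Kn_le; move: (Kn pmin eps Ebar) => K pK.
rewrite mulrCA Ssum_geometric exprS mulrBr.
have e0 : 0 <= pmin * (1 + eps) by rewrite mulr_ge0 // ltW // addr_gt0.
have : pmin * ((1 + eps) * (1 + eps) ^+ K) <= (1 + eps) * Ebar.
  by rewrite mulrCA ler_wpM2l // ltW // addr_gt0.
lra.
Qed.

End PriceLevels.

Theorem lemma7 (R : realType) (N T : nat) (cbar pmin eps Ebar : R)
  (c : nat -> nat -> R) (z : nat -> nat -> R -> R) (gamma delta : R) :
  (1 <= N)%N -> (1 <= T)%N ->
  0 < cbar -> 0 < pmin -> 0 < eps -> pmin * (1 + eps) <= Ebar ->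
  (forall n t, (1 <= n <= N)%N -> (1 <= t <= T)%N -> 0 <= c n t <= cbar) ->
  (forall n t p, (1 <= n <= N)%N -> (1 <= t <= T)%N -> pmin <= p ->
     0 <= z n t p <= 1) ->
  0 < gamma < 1 -> 0 < delta ->
  forall k : 'I_(Kn pmin eps Ebar),
    expected_policy_revenue N T cbar pmin eps Ebar gamma delta c z >=
    (1 - gamma) * (1 - delta / 2) * V_ESP N T pmin eps c z k.+1
    - Phi N cbar pmin Ebar eps delta gamma.
Proof.
move=> N_gt0 _ cbar_gt0 pmin_gt0 eps_gt0 Ebar_ge c_bnd z_bnd gamma01 delta_gt0 k.
have K_gt0 : (0 < Kn pmin eps Ebar)%N := leq_ltn_trans (leq0n k) (ltn_ord k).
exact: (@expected_revenue_lower_bound R N T cbar pmin eps gamma delta c z _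
  N_gt0 K_gt0 cbar_gt0 pmin_gt0 eps_gt0 gamma01 delta_gt0 c_bnd z_bnd Ebar k
  (Kn_le pmin_gt0 eps_gt0 Ebar_ge) (Ssum_Kn_le pmin_gt0 eps_gt0 Ebar_ge)).
Qed.
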